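(* Let $f\in C^1([0,1])$ satisfy $f(0)=f(1)=0$, $f(u)>0$ for $u\in(0,1)$, $f'(0)>0$, $f(u)\leqslant f'(0)u$ for $u\in(0,1)$. For $a>0$ and $b<0$ let $k(x)=\frac{1}{a-b}$ for $x\in[b,a]$ and $k(x)=0$ otherwise, let $r=\frac{a+b}{a-b}\in(-1,1)$, and let $c_l^*,c_r^*$ be as in the context. If $f'(0)\geqslant1$, then $c_l^*<0<c_r^*$. If $f'(0)<1$, there exists a constant $r^*>0$ (depending only on $f'(0)$) such that: (i) if $r>r^*$, then $0<c_l^*<c_r^*$; (ii) if $r=r^*$, then $0=c_l^*<c_r^*$; (iii) if $-r^*<r<r^*$, then $c_l^*<0<c_r^*$; (iv) if $r=-r^*$, then $c_l^*<c_r^*=0$; (v) if $r<-r^*$, then $c_l^*<c_r^*<0$.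
   Context: $c_l^*=\sup_{\lambda<0}\{\lambda^{-1}[\int_{\mathbb R}k(x)e^{\lambda x}dx-1+f'(0)]\}$ and $c_r^*=\inf_{\lambda>0}\{\lambda^{-1}[\int_{\mathbb R}k(x)e^{\lambda x}dx-1+f'(0)]\}$ are the spreading speeds to the left and right of $u_t=\int_{\mathbb R}k(x-y)u(t,y)dy-u+f(u)$. *)

From Stdlib Require Import Reals.
From Coquelicot Require Import Coquelicot.
Open Scope R_scope.

Definition C1_on01 (f fp : R -> R) : Prop :=
  forall x, 0 <= x <= 1 ->
    filterlim (fun y => (f y - f x) / (y - x))
      (within (fun y => 0 <= y <= 1 /\ y <> x) (locally x)) (locally (fp x))
    /\ filterlim fp (within (fun y => 0 <= y <= 1) (locally x)) (locally (fp x)).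

Definition int_R (h : R -> R) : R :=
  RInt_gen h (Rbar_locally m_infty) (Rbar_locally p_infty).

(* spreading speeds, d = f'(0) *)
Definition c_left (k : R -> R) (d : R) : Rbar :=
  Lub_Rbar (fun y => exists lam, lam < 0 /\
     y = / lam * (int_R (fun x => k x * exp (lam * x)) - 1 + d)).

Definition c_right (k : R -> R) (d : R) : Rbar :=
  Glb_Rbar (fun y => exists lam, 0 < lam /\
     y = / lam * (int_R (fun x => k x * exp (lam * x)) - 1 + d)).

Definition k_unif (a b : R) (x : R) : R :=
  if Rle_dec b x then (if Rle_dec x a then / (a - b) else 0) else 0.

From Stdlib Require Import Reals Lra Psatz Classical.
From Coquelicot Require Import Coquelicot.
Open Scope R_scope.

(* With s = (a - b) / 2 and r = (a + b) / (a - b), the substitution mu = s lam turns the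
   quotient defining c_r^* into s (M_r(mu) - 1 + d) / mu, where M_r is the moment generating
   function of the uniform law on [r - 1, r + 1]; as M_r(-mu) = M_{-r}(mu), c_l^* is minus the
   same infimum taken at -r.  Since M_r(mu) = e^{mu r} M_0(mu) increases with r, the set of r at
   which the quotient takes a negative value is a half-line (-oo, sigma).  For d >= 1 the
   quotient is at least (1 + r)^2 / 8 > 0.  For 0 < d < 1 one has sigma < 0, the infimum
   vanishes at r = sigma and is at least s (r - sigma) (1 - d) for r > sigma, so r^* = -sigma.
   Finally c_l^* < c_r^* always: the quotients at r and -r add up to at least d / 8, because
   M_0(mu) >= max(1, 1/2 + mu/8). *)

Lemma exp_sub_exp_opp_ge (m : R) : 0 <= m -> 2 * m <= exp m - exp (- m).
Proof.
  intros Hm.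
  destruct (MVT_gen (fun x => exp x - exp (- x) - 2 * x) 0 m
              (fun x => exp x + exp (- x) - 2)) as [c [_ Hc]].
  - intros x _. auto_derive; [exact I | ring].
  - intros x _. apply (continuity_pt_filterlim (fun x => exp x - exp (- x) - 2 * x)).
    apply (ex_derive_continuous (K := R_AbsRing) (V := R_NormedModule)
             (fun x => exp x - exp (- x) - 2 * x)).
    auto_derive. exact I.
  - rewrite Ropp_0, exp_0 in Hc.
    pose proof (exp_ineq1_le c). pose proof (exp_ineq1_le (- c)). nra.
Qed.

Lemma exp_le_exp (x y : R) : x <= y -> exp x <= exp y.
Proof.
  intros [Hxy | ->]; [left; now apply exp_increasing | right; reflexivity].
Qed.

Lemma exp_ge_quad (x : R) : 0 <= x -> 1 + x + x * x / 4 <= exp x.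
Proof.
  intros Hx.
  replace (exp x) with (exp (x / 2) * exp (x / 2)) by (rewrite <- exp_plus; f_equal; field).
  pose proof (exp_ineq1_le (x / 2)). nra.
Qed.

Lemma exp_sub1_le (x : R) : exp x - 1 <= x * exp x.
Proof.
  pose proof (exp_ineq1_le (- x)). pose proof (exp_pos x).
  assert (exp x * exp (- x) = 1) by (rewrite <- exp_plus, Rplus_opp_r; apply exp_0).
  nra.
Qed.

Lemma ln_ratio_pos (p q : R) : 0 < p < q -> 0 < ln (q / p).
Proof.
  intros Hpq. rewrite <- ln_1. apply ln_increasing; [lra|].
  apply Rlt_div_r; lra.
Qed.

Lemma is_RInt_null (h : R -> R) (x y : R) :
  (forall t, Rmin x y < t < Rmax x y -> h t = 0) -> is_RInt h x y 0.
Proof.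
  intros H. apply is_RInt_ext with (fun _ => 0); [intros t Ht; symmetry; auto|].
  assert (E : scal (y - x) 0 = 0) by (cbv [scal]; simpl; cbv [mult]; simpl; ring).
  pose proof (is_RInt_const (V := R_NormedModule) x y 0) as H0.
  change (is_RInt (fun _ : R => 0) x y (scal (y - x) 0)) in H0.
  rewrite E in H0. exact H0.
Qed.

Lemma int_R_k_unif_exp (a b lam : R) : b < a -> lam <> 0 ->
  int_R (fun x => k_unif a b x * exp (lam * x)) =
  (exp (lam * a) - exp (lam * b)) / (lam * (a - b)).
Proof.
  intros Hab Hl.
  set (L := (exp (lam * a) - exp (lam * b)) / (lam * (a - b))).
  assert (Hmid : is_RInt (fun x => k_unif a b x * exp (lam * x)) b a L).
  { apply is_RInt_ext with (fun x => / (a - b) * exp (lam * x)).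
    { intros t Ht. rewrite Rmin_left, Rmax_right in Ht by lra.
      unfold k_unif. destruct (Rle_dec b t), (Rle_dec t a); lra || reflexivity. }
    replace L with (minus (/ (a - b) * (exp (lam * a) / lam)) (/ (a - b) * (exp (lam * b) / lam)))
      by (unfold L, minus, plus, opp; simpl; field; lra).
    apply (is_RInt_derive (fun x => / (a - b) * (exp (lam * x) / lam))).
    - intros x _. auto_derive; [exact I | field; lra].
    - intros x _. apply (ex_derive_continuous (K := R_AbsRing) (V := R_NormedModule)).
      auto_derive. exact I. }
  unfold int_R. apply is_RInt_gen_unique.
  (* The integrand vanishes off [b, a], so every integral from x < b to y > a equals L. *)
  intros P HP. apply Filter_prod with (fun x => x < b) (fun y => a < y).
  - exists b. auto.
  - exists a. auto.
  - intros x y Hx Hy. simpl in Hx, Hy. exists L. split; [|apply locally_singleton; exact HP].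
    replace L with (plus (plus 0 L) 0) by (unfold plus; simpl; ring).
    apply (is_RInt_Chasles (V := R_CompleteNormedModule)) with a;
      [apply (is_RInt_Chasles (V := R_CompleteNormedModule)) with b; [|exact Hmid]|];
      apply is_RInt_null; intros t Ht; simpl in Ht;
      rewrite Rmin_left, Rmax_right in Ht by lra;
      unfold k_unif; destruct (Rle_dec b t), (Rle_dec t a); lra || ring.
Qed.

(* Moment generating function of the uniform law on [rho - 1, rho + 1]; [k_unif a b] is the
   uniform density on [s (r - 1), s (r + 1)] with s = (a - b) / 2, r = (a + b) / (a - b). *)
Definition unif_mgf (rho mu : R) : R :=
  (exp (mu * (rho + 1)) - exp (mu * (rho - 1))) / (2 * mu).

Definition speed_quot (d rho mu : R) : R := (unif_mgf rho mu - 1 + d) / mu.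

Lemma k_unif_quot (a b d lam : R) : b < a -> lam <> 0 ->
  / lam * (int_R (fun x => k_unif a b x * exp (lam * x)) - 1 + d) =
  (a - b) / 2 * speed_quot d ((a + b) / (a - b)) ((a - b) / 2 * lam).
Proof.
  intros Hab Hl. rewrite int_R_k_unif_exp by assumption.
  unfold speed_quot, unif_mgf.
  replace ((a - b) / 2 * lam * ((a + b) / (a - b) + 1)) with (lam * a) by (field; lra).
  replace ((a - b) / 2 * lam * ((a + b) / (a - b) - 1)) with (lam * b) by (field; lra).
  field. lra.
Qed.

Lemma speed_quot_opp (d rho mu : R) : mu <> 0 ->
  speed_quot d rho (- mu) = - speed_quot d (- rho) mu.
Proof.
  intros Hmu. unfold speed_quot, unif_mgf.
  replace (- mu * (rho + 1)) with (mu * (- rho - 1)) by ring.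
  replace (- mu * (rho - 1)) with (mu * (- rho + 1)) by ring.
  field. exact Hmu.
Qed.

Definition scaled_inf (s : R) (h : R -> R) : Rbar :=
  Glb_Rbar (fun y => exists mu, 0 < mu /\ y = s * h mu).

Lemma c_right_k_unif (a b d : R) : b < a ->
  c_right (k_unif a b) d = scaled_inf ((a - b) / 2) (speed_quot d ((a + b) / (a - b))).
Proof.
  intros Hab. apply Glb_Rbar_eqset. intros y; split.
  - intros [lam [Hl ->]]. exists ((a - b) / 2 * lam).
    split; [apply Rmult_lt_0_compat; lra | apply k_unif_quot; lra].
  - intros [mu [Hmu ->]]. exists (mu / ((a - b) / 2)).
    assert (Hlam : 0 < mu / ((a - b) / 2)) by (apply Rdiv_lt_0_compat; lra).
    split; [exact Hlam|]. rewrite k_unif_quot by lra.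
    f_equal. f_equal. field. lra.
Qed.

Lemma c_left_k_unif (a b d : R) : b < a ->
  c_left (k_unif a b) d =
  Rbar_opp (scaled_inf ((a - b) / 2) (speed_quot d (- ((a + b) / (a - b))))).
Proof.
  intros Hab. apply is_lub_Rbar_unique.
  apply (is_lub_Rbar_eqset (fun y => exists nu, 0 < nu /\
           - y = (a - b) / 2 * speed_quot d (- ((a + b) / (a - b))) nu)).
  2: exact (proj1 (is_lub_Rbar_opp (fun y => exists nu, 0 < nu /\
           y = (a - b) / 2 * speed_quot d (- ((a + b) / (a - b))) nu) _) (Glb_Rbar_correct _)).
  intros y; split.
  - intros [lam [Hl ->]]. exists (- ((a - b) / 2 * lam)).
    split; [nra|]. rewrite k_unif_quot, speed_quot_opp, !Ropp_involutive by nra.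
    ring.
  - intros [nu [Hnu Hy]]. exists (- (nu / ((a - b) / 2))).
    assert (Hlam : 0 < nu / ((a - b) / 2)) by (apply Rdiv_lt_0_compat; lra).
    split; [lra|]. rewrite k_unif_quot by lra.
    replace ((a - b) / 2 * - (nu / ((a - b) / 2))) with (- nu) by (field; lra).
    rewrite speed_quot_opp by lra. lra.
Qed.

Section ScaledInf.

Variable s : R.
Hypothesis s_pos : 0 < s.

Lemma scaled_inf_le (h : R -> R) (mu : R) : 0 < mu -> Rbar_le (scaled_inf s h) (s * h mu).
Proof. intros Hmu. apply (proj1 (Glb_Rbar_correct _)). exists mu. auto. Qed.

Lemma scaled_inf_ge (h : R -> R) (c : R) :
  (forall mu, 0 < mu -> c <= h mu) -> Rbar_le (s * c) (scaled_inf s h).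
Proof.
  intros Hc. apply (proj2 (Glb_Rbar_correct _)).
  intros y [mu [Hmu ->]]. simpl. apply Rmult_le_compat_l; [lra | auto].
Qed.

Lemma scaled_inf_gt0 (h : R -> R) (c : R) :
  0 < c -> (forall mu, 0 < mu -> c <= h mu) -> Rbar_lt 0 (scaled_inf s h).
Proof.
  intros Hc Hh. apply Rbar_lt_le_trans with (s * c); [simpl; nra | now apply scaled_inf_ge].
Qed.

Lemma scaled_inf_lt0 (h : R -> R) (mu : R) :
  0 < mu -> h mu < 0 -> Rbar_lt (scaled_inf s h) 0.
Proof.
  intros Hmu Hh. apply Rbar_le_lt_trans with (s * h mu); [now apply scaled_inf_le | simpl; nra].
Qed.

Lemma scaled_inf_eq0 (h : R -> R) :
  (forall mu, 0 < mu -> 0 <= h mu) ->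
  (forall eps, 0 < eps -> exists mu, 0 < mu /\ h mu < eps) ->
  scaled_inf s h = 0.
Proof.
  intros Hge Hsmall.
  assert (Hlo : Rbar_le (s * 0) (scaled_inf s h)) by now apply scaled_inf_ge.
  assert (Hup : forall eps, 0 < eps -> Rbar_le (scaled_inf s h) (s * eps)).
  { intros eps Heps. destruct (Hsmall eps Heps) as [mu [Hmu Hh]].
    apply Rbar_le_trans with (s * h mu); [now apply scaled_inf_le | simpl; nra]. }
  destruct (scaled_inf s h) as [x| |]; simpl in *.
  - f_equal. apply Rle_antisym; [|lra].
    apply Rnot_lt_le. intros Hx. specialize (Hup (x / (2 * s))).
    assert (s * (x / (2 * s)) = x / 2) by (field; lra).
    assert (0 < x / (2 * s)) by (apply Rdiv_lt_0_compat; lra).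
    lra.
  - destruct (Hup 1 Rlt_0_1).
  - contradiction.
Qed.

Lemma scaled_inf_opp_lt (h1 h2 : R -> R) (g : R) :
  0 < g -> (forall mu nu, 0 < mu -> 0 < nu -> g <= h1 mu + h2 nu) ->
  Rbar_lt (Rbar_opp (scaled_inf s h2)) (scaled_inf s h1).
Proof.
  intros Hg Hsum.
  assert (Hlo : forall mu, 0 < mu -> Rbar_le (s * (g - h1 mu)) (scaled_inf s h2)).
  { intros mu Hmu. apply scaled_inf_ge. intros nu Hnu. specialize (Hsum mu nu Hmu Hnu). lra. }
  pose proof (Hlo 1 Rlt_0_1) as Hlo1.
  pose proof (scaled_inf_le h2 1 Rlt_0_1) as Hup1.
  destruct (scaled_inf s h2) as [x| |]; simpl in Hlo1, Hup1; try contradiction.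
  apply Rbar_lt_le_trans with (s * (g - x / s)).
  - simpl. replace (s * (g - x / s)) with (s * g - x) by (field; lra). nra.
  - apply scaled_inf_ge. intros mu Hmu. specialize (Hlo mu Hmu). simpl in Hlo.
    assert (g - h1 mu <= x / s) by (apply Rle_div_r; [lra | rewrite Rmult_comm; exact Hlo]).
    lra.
Qed.

End ScaledInf.

Lemma unif_mgf_shift (rho rho' mu : R) :
  unif_mgf rho' mu = exp (mu * (rho' - rho)) * unif_mgf rho mu.
Proof.
  unfold unif_mgf.
  replace (mu * (rho' + 1)) with (mu * (rho' - rho) + mu * (rho + 1)) by ring.
  replace (mu * (rho' - 1)) with (mu * (rho' - rho) + mu * (rho - 1)) by ring.
  rewrite !exp_plus. unfold Rdiv. ring.
Qed.

Lemma unif_mgf_ge_exp (rho mu : R) : 0 < mu -> exp (mu * rho) <= unif_mgf rho mu.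
Proof.
  intros Hmu. rewrite (unif_mgf_shift 0 rho mu), Rminus_0_r.
  assert (H1 : 1 <= unif_mgf 0 mu).
  { unfold unif_mgf. rewrite !Rplus_0_l, Rmult_1_r.
    replace (mu * (0 - 1)) with (- mu) by ring.
    apply Rle_div_r; [lra|]. pose proof (exp_sub_exp_opp_ge mu). lra. }
  pose proof (exp_pos (mu * rho)). nra.
Qed.

Lemma unif_mgf_ge_lin (rho mu : R) : 0 < mu -> -1 <= rho <= 1 ->
  (1 + rho) / 2 + mu * ((1 + rho) * (1 + rho)) / 8 <= unif_mgf rho mu.
Proof.
  intros Hmu Hrho. unfold unif_mgf.
  assert (Hx : 0 <= mu * (rho + 1)) by nra.
  pose proof (exp_ge_quad _ Hx).
  assert (exp (mu * (rho - 1)) <= 1).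
  { rewrite <- exp_0 at 2. apply exp_le_exp. nra. }
  apply Rle_div_r; [lra|]. nra.
Qed.

Lemma speed_quot_ge_lin (d rho mu : R) : 0 < mu -> rho + d / mu <= speed_quot d rho mu.
Proof.
  intros Hmu. unfold speed_quot.
  pose proof (unif_mgf_ge_exp rho mu Hmu). pose proof (exp_ineq1_le (mu * rho)).
  apply (Rle_div_r _ _ mu); [lra|].
  replace ((rho + d / mu) * mu) with (mu * rho + d) by (field; lra). lra.
Qed.

Lemma speed_quot_ge_sq (d rho mu : R) : 1 <= d -> -1 <= rho <= 1 -> 0 < mu ->
  (1 + rho) * (1 + rho) / 8 <= speed_quot d rho mu.
Proof.
  intros Hd Hrho Hmu. unfold speed_quot.
  pose proof (unif_mgf_ge_lin rho mu Hmu Hrho).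
  apply (Rle_div_r _ _ mu); [lra|]. nra.
Qed.

Lemma speed_quot_ge_add (d rho mu : R) : 0 <= d <= 1 -> 0 <= rho -> 0 < mu ->
  rho + d / 8 <= speed_quot d rho mu.
Proof.
  intros Hd Hrho Hmu. unfold speed_quot.
  rewrite (unif_mgf_shift 0 rho mu), Rminus_0_r.
  pose proof (unif_mgf_ge_exp 0 mu Hmu) as H1. rewrite Rmult_0_r, exp_0 in H1.
  pose proof (unif_mgf_ge_lin 0 mu Hmu ltac:(lra)) as H2.
  pose proof (exp_ineq1_le (mu * rho)).
  assert (0 <= mu * rho) by nra.
  apply (Rle_div_r _ _ mu); [lra|]. nra.
Qed.

Lemma speed_quot_sum_ge (d rho mu nu : R) : 0 <= d <= 1 -> 0 < mu -> 0 < nu ->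
  d / 8 <= speed_quot d rho mu + speed_quot d (- rho) nu.
Proof.
  intros Hd Hmu Hnu.
  assert (Hdiv : forall x, 0 < x -> 0 <= d / x) by (intros; apply Rdiv_le_0_compat; lra).
  destruct (Rle_lt_dec 0 rho).
  - pose proof (speed_quot_ge_add d rho mu Hd ltac:(lra) Hmu).
    pose proof (speed_quot_ge_lin d (- rho) nu Hnu). pose proof (Hdiv nu Hnu). lra.
  - pose proof (speed_quot_ge_add d (- rho) nu Hd ltac:(lra) Hnu).
    pose proof (speed_quot_ge_lin d rho mu Hmu). pose proof (Hdiv mu Hmu). lra.
Qed.

Lemma speed_quot_mono (d rho rho' mu : R) : 0 < mu -> rho <= rho' ->
  speed_quot d rho mu <= speed_quot d rho' mu.
Proof.
  intros Hmu Hrho. unfold speed_quot, Rdiv.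
  apply Rmult_le_compat_r; [left; apply Rinv_0_lt_compat; lra|].
  rewrite (unif_mgf_shift rho rho' mu).
  assert (1 <= exp (mu * (rho' - rho))).
  { pose proof (exp_ineq1_le (mu * (rho' - rho))). nra. }
  pose proof (unif_mgf_ge_exp rho mu Hmu). pose proof (exp_pos (mu * rho)). nra.
Qed.

Lemma speed_quot_ge_above (d sigma rho mu : R) : d <= 1 -> 0 < mu -> sigma <= rho ->
  0 <= speed_quot d sigma mu -> (rho - sigma) * (1 - d) <= speed_quot d rho mu.
Proof.
  intros Hd Hmu Hrho Hsigma. unfold speed_quot in *.
  assert (Hq : 1 - d <= unif_mgf sigma mu).
  { apply (Rle_div_r _ _ mu) in Hsigma; lra. }
  rewrite (unif_mgf_shift sigma rho mu).
  assert (Ht : 0 <= mu * (rho - sigma)) by nra.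
  assert ((1 + mu * (rho - sigma)) * (1 - d) <= exp (mu * (rho - sigma)) * unif_mgf sigma mu).
  { apply Rmult_le_compat; [lra | lra | apply exp_ineq1_le | exact Hq]. }
  apply (Rle_div_r _ _ mu); [lra|]. nra.
Qed.

Definition has_neg_quot (d rho : R) : Prop :=
  exists mu, 0 < mu /\ speed_quot d rho mu < 0.

Lemma has_neg_quot_le (d rho rho' : R) :
  rho <= rho' -> has_neg_quot d rho' -> has_neg_quot d rho.
Proof.
  intros Hrho [mu [Hmu Hq]]. exists mu. split; [exact Hmu|].
  pose proof (speed_quot_mono d rho rho' mu Hmu Hrho). lra.
Qed.

Lemma speed_quot_neg_iff (d rho mu : R) : 0 < mu ->
  speed_quot d rho mu < 0 <-> unif_mgf rho mu < 1 - d.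
Proof.
  intros Hmu. unfold speed_quot. rewrite (Rlt_div_l _ _ mu), Rmult_0_l by lra. lra.
Qed.

Lemma speed_quot_neg_mu_bound (d rho mu : R) : 0 < d -> -1 <= rho <= 1 -> 0 < mu ->
  speed_quot d rho mu < 0 -> mu * ((1 + rho) * (1 + rho)) < 8.
Proof.
  intros Hd Hrho Hmu Hq. apply speed_quot_neg_iff in Hq; [|exact Hmu].
  pose proof (unif_mgf_ge_lin rho mu Hmu Hrho). lra.
Qed.

Lemma has_neg_quot_low (d : R) : 0 < d < 1 -> has_neg_quot d (-1 + (1 - d) / 2).
Proof.
  intros Hd. set (mu := 2 / (1 - d)).
  assert (Hmu : 0 < mu) by (apply Rdiv_lt_0_compat; lra).
  exists mu. split; [exact Hmu|]. apply speed_quot_neg_iff; [exact Hmu|].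
  unfold unif_mgf.
  replace (mu * (-1 + (1 - d) / 2 + 1)) with 1 by (unfold mu; field; lra).
  apply Rlt_div_l; [lra|].
  replace ((1 - d) * (2 * mu)) with 4 by (unfold mu; field; lra).
  pose proof exp_le_3. pose proof (exp_pos (mu * (-1 + (1 - d) / 2 - 1))). lra.
Qed.

Lemma has_neg_quot_ub (d rho : R) : 0 < d < 1 -> has_neg_quot d rho -> rho <= - (d / 32).
Proof.
  intros Hd [mu [Hmu Hq]].
  pose proof (speed_quot_ge_lin d rho mu Hmu).
  assert (0 < d / mu) by (apply Rdiv_lt_0_compat; lra).
  destruct (Rle_lt_dec rho (- (1 / 2))); [lra|].
  destruct (Rle_lt_dec mu 32).
  - assert (d / 32 <= d / mu).
    { unfold Rdiv. apply Rmult_le_compat_l; [lra|]. apply Rinv_le_contravar; lra. }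
    lra.
  - pose proof (speed_quot_neg_mu_bound d rho mu ltac:(lra) ltac:(lra) Hmu Hq). nra.
Qed.

Lemma has_neg_quot_lub (d : R) : 0 < d < 1 -> { sigma | is_lub (has_neg_quot d) sigma }.
Proof.
  intros Hd. apply completeness.
  - exists (- (d / 32)). intros rho. now apply has_neg_quot_ub.
  - exists (-1 + (1 - d) / 2). now apply has_neg_quot_low.
Qed.

Lemma is_lub_approx (E : R -> Prop) (x eta : R) :
  is_lub E x -> 0 < eta -> exists y, E y /\ x - eta < y.
Proof.
  intros [_ Hleast] Heta. apply NNPP. intros Hno.
  enough (x <= x - eta) by lra.
  apply Hleast. intros y Hy. apply Rnot_lt_le. intros Hlt. apply Hno. now exists y.
Qed.

Section Threshold.

Variables d sigma : R.
Hypothesis d_range : 0 < d < 1.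
Hypothesis sigma_lub : is_lub (has_neg_quot d) sigma.

Lemma threshold_ge : -1 + (1 - d) / 2 <= sigma.
Proof. apply (proj1 sigma_lub), has_neg_quot_low, d_range. Qed.

Lemma threshold_neg : sigma < 0.
Proof.
  enough (sigma <= - (d / 32)) by lra.
  apply (proj2 sigma_lub). intros rho. now apply has_neg_quot_ub.
Qed.

Lemma has_neg_quot_below (rho : R) : rho < sigma -> has_neg_quot d rho.
Proof.
  intros Hrho. destruct (is_lub_approx _ _ (sigma - rho) sigma_lub) as [y [Hy Hlt]]; [lra|].
  apply has_neg_quot_le with y; [lra | exact Hy].
Qed.

Lemma speed_quot_threshold_ge0 (mu : R) : 0 < mu -> 0 <= speed_quot d sigma mu.
Proof.
  intros Hmu. apply Rnot_lt_le. intros Hq. apply speed_quot_neg_iff in Hq; [|exact Hmu].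
  assert (Hp : 0 < unif_mgf sigma mu)
    by (pose proof (unif_mgf_ge_exp sigma mu Hmu); pose proof (exp_pos (mu * sigma)); lra).
  set (p := unif_mgf sigma mu) in Hq, Hp.
  (* At sigma + eta the mgf is multiplied by sqrt ((1 - d) / p), so it stays below 1 - d. *)
  set (eta := ln ((1 - d) / p) / (2 * mu)).
  assert (Hln : 0 < ln ((1 - d) / p)) by (apply ln_ratio_pos; lra).
  assert (Heta : 0 < eta) by (apply Rdiv_lt_0_compat; lra).
  enough (has_neg_quot d (sigma + eta)) by (pose proof (proj1 sigma_lub _ H); lra).
  exists mu. split; [exact Hmu|]. apply speed_quot_neg_iff; [exact Hmu|].
  rewrite (unif_mgf_shift sigma). fold p.
  replace (mu * (sigma + eta - sigma)) with (ln ((1 - d) / p) / 2) by (unfold eta; field; lra).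
  assert (exp (ln ((1 - d) / p) / 2) < (1 - d) / p).
  { rewrite <- (exp_ln ((1 - d) / p)) at 2 by (apply Rdiv_lt_0_compat; lra).
    apply exp_increasing. lra. }
  apply Rlt_div_r in H; lra.
Qed.

Lemma speed_quot_threshold_small (eps : R) :
  0 < eps -> exists mu, 0 < mu /\ speed_quot d sigma mu < eps.
Proof.
  intros Heps. set (e := 1 - d).
  (* A witness mu for some rho in (sigma - eta, sigma] has mu (1 + rho)^2 < 8, hence
     mu eta <= 1, and moving from rho to sigma multiplies the mgf by exp (mu (sigma - rho)). *)
  set (eta := Rmin (e * e / 128) (eps / 3)).
  assert (Heta : 0 < eta) by (apply Rmin_pos; unfold e; nra).
  assert (Heta1 : eta <= e * e / 128) by apply Rmin_l.
  assert (Heta2 : eta <= eps / 3) by apply Rmin_r.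
  destruct (is_lub_approx _ _ eta sigma_lub Heta) as [rho [[mu [Hmu Hq]] Hrho]].
  assert (Hrho_le : rho <= sigma) by (apply (proj1 sigma_lub); now exists mu).
  pose proof threshold_ge. pose proof threshold_neg.
  assert (Hrho_low : e / 4 <= 1 + rho) by (unfold e in *; nra).
  pose proof (speed_quot_neg_mu_bound d rho mu ltac:(lra) ltac:(unfold e in *; lra) Hmu Hq).
  apply speed_quot_neg_iff in Hq; [|exact Hmu].
  set (t := mu * (sigma - rho)).
  assert (Ht : 0 <= t <= mu * eta) by (unfold t; split; nra).
  assert (Hmu_eta : mu * eta <= 1).
  { assert (e * e <= 16 * ((1 + rho) * (1 + rho))) by (unfold e in *; nra).
    assert (mu * (e * e) <= 16 * (mu * ((1 + rho) * (1 + rho)))) by nra.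
    assert (mu * eta <= mu * (e * e / 128)) by (apply Rmult_le_compat_l; lra).
    lra. }
  assert (Hexp : exp t <= 3) by (pose proof exp_le_3; pose proof (exp_le_exp t 1 ltac:(lra)); lra).
  pose proof (exp_sub1_le t).
  exists mu. split; [exact Hmu|].
  unfold speed_quot. rewrite (unif_mgf_shift rho). fold t.
  apply Rlt_div_l; [exact Hmu|].
  assert (exp t * unif_mgf rho mu < exp t * e) by (apply Rmult_lt_compat_l; [apply exp_pos | exact Hq]).
  assert (e * (exp t - 1) <= 3 * t).
  { assert (He : 0 < e < 1) by (unfold e; lra).
    pose proof (exp_ineq1_le t).
    assert (e * (exp t - 1) <= exp t - 1) by nra.
    assert (t * exp t <= 3 * t) by nra.
    lra. }
  assert (3 * t <= eps * mu) by nra.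
  unfold e in *. lra.
Qed.

Variable s : R.
Hypothesis s_pos : 0 < s.

Lemma scaled_speed_below (rho : R) : rho < sigma -> Rbar_lt (scaled_inf s (speed_quot d rho)) 0.
Proof.
  intros Hrho. destruct (has_neg_quot_below rho Hrho) as [mu [Hmu Hq]].
  exact (scaled_inf_lt0 s s_pos _ mu Hmu Hq).
Qed.

Lemma scaled_speed_at : scaled_inf s (speed_quot d sigma) = 0.
Proof.
  apply scaled_inf_eq0; [exact s_pos | exact speed_quot_threshold_ge0 | exact speed_quot_threshold_small].
Qed.

Lemma scaled_speed_above (rho : R) : sigma < rho -> Rbar_lt 0 (scaled_inf s (speed_quot d rho)).
Proof.
  intros Hrho. apply (scaled_inf_gt0 s s_pos _ ((rho - sigma) * (1 - d))); [nra|].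
  intros mu Hmu. apply speed_quot_ge_above; [lra | exact Hmu | lra |].
  now apply speed_quot_threshold_ge0.
Qed.

End Threshold.

Lemma scaled_speed_opp_lt (d s rho : R) : 0 < d <= 1 -> 0 < s ->
  Rbar_lt (Rbar_opp (scaled_inf s (speed_quot d (- rho)))) (scaled_inf s (speed_quot d rho)).
Proof.
  intros Hd Hs. apply (scaled_inf_opp_lt s Hs _ _ (d / 8)); [lra|].
  intros mu nu Hmu Hnu. apply speed_quot_sum_ge; lra.
Qed.

Lemma scaled_speed_pos_ge1 (d s rho : R) : 1 <= d -> -1 < rho < 1 -> 0 < s ->
  Rbar_lt 0 (scaled_inf s (speed_quot d rho)).
Proof.
  intros Hd Hrho Hs. apply (scaled_inf_gt0 s Hs _ ((1 + rho) * (1 + rho) / 8)); [nra|].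
  intros mu Hmu. apply speed_quot_ge_sq; lra.
Qed.

Lemma c_left_lt_c_right_k_unif (a b d : R) : b < a -> 0 < d <= 1 ->
  Rbar_lt (c_left (k_unif a b) d) (c_right (k_unif a b) d).
Proof.
  intros Hab Hd. rewrite c_left_k_unif, c_right_k_unif by exact Hab.
  apply scaled_speed_opp_lt; lra.
Qed.

Lemma k_unif_ratio_range (a b : R) : 0 < a -> b < 0 -> -1 < (a + b) / (a - b) < 1.
Proof.
  intros Ha Hb. split; [apply Rlt_div_r | apply Rlt_div_l]; lra.
Qed.

Lemma Rbar_opp_lt_0 (x : Rbar) : Rbar_lt 0 x -> Rbar_lt (Rbar_opp x) 0.
Proof. destruct x; simpl; auto; lra. Qed.

Lemma Rbar_opp_gt_0 (x : Rbar) : Rbar_lt x 0 -> Rbar_lt 0 (Rbar_opp x).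
Proof. destruct x; simpl; auto; lra. Qed.

Theorem corollary5p4 :
  (forall (f fp : R -> R) (a b : R),
      C1_on01 f fp -> f 0 = 0 -> f 1 = 0 ->
      (forall u, 0 < u < 1 -> 0 < f u) -> 0 < fp 0 ->
      (forall u, 0 < u < 1 -> f u <= fp 0 * u) ->
      0 < a -> b < 0 -> 1 <= fp 0 ->
      Rbar_lt (c_left (k_unif a b) (fp 0)) (Finite 0) /\
      Rbar_lt (Finite 0) (c_right (k_unif a b) (fp 0)))
  /\
  (forall d : R, 0 < d < 1 ->
    exists rstar : R, 0 < rstar /\
    forall (f fp : R -> R) (a b : R),
      C1_on01 f fp -> f 0 = 0 -> f 1 = 0 ->
      (forall u, 0 < u < 1 -> 0 < f u) -> 0 < fp 0 ->
      (forall u, 0 < u < 1 -> f u <= fp 0 * u) ->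
      0 < a -> b < 0 -> fp 0 = d ->
      let r := (a + b) / (a - b) in
      let cl := c_left (k_unif a b) (fp 0) in
      let cr := c_right (k_unif a b) (fp 0) in
      (rstar < r -> Rbar_lt (Finite 0) cl /\ Rbar_lt cl cr) /\
      (r = rstar -> cl = Finite 0 /\ Rbar_lt cl cr) /\
      (- rstar < r < rstar -> Rbar_lt cl (Finite 0) /\ Rbar_lt (Finite 0) cr) /\
      (r = - rstar -> Rbar_lt cl cr /\ cr = Finite 0) /\
      (r < - rstar -> Rbar_lt cl cr /\ Rbar_lt cr (Finite 0))).
Proof.
  split.
  - intros f fp a b _ _ _ _ _ _ Ha Hb Hd.
    pose proof (k_unif_ratio_range a b Ha Hb).
    rewrite c_left_k_unif, c_right_k_unif by lra.
    split; [apply Rbar_opp_lt_0|]; apply scaled_speed_pos_ge1; lra.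
  - intros d Hd. destruct (has_neg_quot_lub d Hd) as [sigma Hsigma].
    pose proof (threshold_neg d sigma Hd Hsigma).
    exists (- sigma). split; [lra|].
    intros f fp a b _ _ _ _ _ _ Ha Hb -> r cl cr.
    assert (Hlt : Rbar_lt cl cr) by (apply c_left_lt_c_right_k_unif; lra).
    assert (Hs : 0 < (a - b) / 2) by lra.
    pose proof (scaled_speed_below d sigma Hsigma _ Hs) as Below.
    pose proof (scaled_speed_at d sigma Hd Hsigma _ Hs) as At.
    pose proof (scaled_speed_above d sigma Hd Hsigma _ Hs) as Above.
    unfold cl, cr in *. rewrite c_left_k_unif, c_right_k_unif in * by lra. fold r in Hlt |- *.
    split; [|split; [|split; [|split]]]; intros Hr.
    + split; [apply Rbar_opp_gt_0, Below; lra | exact Hlt].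
    + split; [|exact Hlt]. replace (- r) with sigma by lra. rewrite At. simpl. now rewrite Ropp_0.
    + split; [apply Rbar_opp_lt_0|]; apply Above; lra.
    + split; [exact Hlt|]. now rewrite Hr, Ropp_involutive.
    + split; [exact Hlt|]. apply Below. lra.
Qed.
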